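(* Let $\epsilon\in(0,1]$ and $p \in (0,1)$ be constants and let $\xi>0$ be an arbitrary constant. Consider $\mathrm{USD}_p$ started from a configuration $\mathbf{x}(0)=(x_1(0),x_2(0),u(0))$ with $x_1(0)\in[\epsilon n, x_2(0)]$, $u(0)\le n/2$, and $|\Delta_w(0)| < \xi\sqrt{n\log n}$. Let $T_w := \inf\{t \geq 0 : |\Delta_w(t)| \geq \xi\sqrt{n\log n}\}$. Then with high probability $T_w = O(n\log^2 n)$.
   Context: Population protocol with $n$ agents, each in a state from $\{1,2,\bot\}$ (Opinion 1, Opinion 2, undecided). At each time step a scheduler picks an ordered pair $(i,j)$ of agents uniformly at random, independently of the past; only the initiator $i$ changes state. In $\mathrm{USD}_p$: if the initiator is $2$ and the responder $1$, the initiator becomes $\bot$; if the initiator is $1$ and the responder $2$, the initiator becomes $\bot$ with probability $1-p$ and otherwise stays $1$; if the initiator is $\bot$, it adopts the responder's state; otherwise nothing changes. $x_1(t),x_2(t),u(t)$ are the numbers of agents in states $1,2,\bot$ after $t$ interactions. The weighted bias is $\Delta_w(t) := x_1(t) - (1-p)x_2(t)$. ''With high probability'' means with probability at least $1-n^{-c}$ for a constant $c>0$. *)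

From Stdlib Require Import Reals Lra Lia List Arith.
Open Scope R_scope.

Inductive opinion := One | Two | Und.

Definition opinion_eqb (a b : opinion) : bool :=
  match a, b with
  | One, One | Two, Two | Und, Und => true
  | _, _ => false
  end.

(** A configuration of n agents: agent k (for k < n) has state sigma k. *)
Definition config := nat -> opinion.

Definition count (n : nat) (s : config) (o : opinion) : nat :=
  length (filter (fun k => opinion_eqb (s k) o) (seq 0 n)).

Definition x1 n s := INR (count n s One).
Definition x2 n s := INR (count n s Two).
Definition uu n s := INR (count n s Und).

Definition Delta_w (n : nat) (p : R) (s : config) : R := x1 n s - (1 - p) * x2 n s.

Definition update (s : config) (i : nat) (o : opinion) : config :=
  fun k => if Nat.eqb k i then o else s k.

(** Expected value of h after the interaction with initiator i, responder j. *)
Definition interact_value (p : R) (h : config -> R) (s : config) (i j : nat) : R :=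
  match s i, s j with
  | Two, One => h (update s i Und)
  | One, Two => p * h s + (1 - p) * h (update s i Und)
  | Und, o => h (update s i o)
  | _, _ => h s
  end.

Definition sumR (l : list nat) (f : nat -> R) : R :=
  fold_right Rplus 0 (map f l).

Definition step_expect (n : nat) (p : R) (h : config -> R) (s : config) : R :=
  / (INR n * INR (n - 1)) *
  sumR (seq 0 n) (fun i =>
    sumR (filter (fun j => negb (Nat.eqb j i)) (seq 0 n))
         (fun j => interact_value p h s i j)).

(** hit_prob n p thr t s = Pr[ T <= t ] where T = inf {t >= 0 : |Delta_w(t)| >= thr}
    for USD_p started from configuration s (probability of the Markov chain
    hitting the target set within t interactions, defined by first-step analysis). *)
Fixpoint hit_prob (n : nat) (p thr : R) (t : nat) (s : config) : R :=
  if Rle_dec thr (Rabs (Delta_w n p s)) then 1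
  else match t with
       | O => 0
       | S t' => step_expect n p (hit_prob n p thr t') s
       end.

(* Write q = 1 - p, a and b for the numbers of agents holding opinions 1 and 2, and
   Δ = a - q b.  While |Δ| is below thr = ξ √(n log n), which is at most q n / 6 for large n,
   the potential
     V = (576 / q^3) ((thr + 1)^2 - Δ^2) + 3 n (H_n - H_(a+b-1))      (H the harmonic numbers)
   is nonnegative, of size O(n log n), and drops by at least 1 in expectation at every
   interaction: if a + b <= n / 3, undecided agents adopting an opinion drive the harmonic
   term down; otherwise |Δ| <= q n / 6 forces a b >= q n^2 / 144 and Δ^2 grows.  Hence
   t P(T > t) <= V, so each block of O(n log n) interactions reaches the threshold with
   probability at least 1/2, and log n consecutive blocks all fail with probability at most
   2^(-log n) = n^(-ln 2). *)

From Stdlib Require Import Reals Lra Lia List ZArith.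
Open Scope R_scope.

(** * Hitting times *)

Section Hitting.

Variables (State : Type) (E : (State -> R) -> State -> R) (stopped : State -> Prop).
Variable stopped_dec : forall s, {stopped s} + {~ stopped s}.

(* [E h s] is the expected value of [h] after one step from [s], so [hit t s] is the
   probability of entering [stopped] within [t] steps. *)
Fixpoint hit (t : nat) (s : State) : R :=
  if stopped_dec s then 1
  else match t with O => 0 | S t' => E (hit t') s end.

Definition survival t s := 1 - hit t s.

Variable G : State -> Prop.

Hypothesis E_affine : forall h1 h2 a b s,
  (forall x, h2 x = a * h1 x + b) -> E h2 s = a * E h1 s + b.
(* Monotonicity of [E], and at the same time: the chain does not leave [G] before stopping. *)
Hypothesis E_mono : forall h1 h2 s, G s -> ~ stopped s ->
  (forall x, G x -> h1 x <= h2 x) -> E h1 s <= E h2 s.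

Lemma expect_const c s : E (fun _ => c) s = c.
Proof. rewrite (E_affine (fun _ => 0) _ 0 c) by (intros; ring). ring. Qed.

Lemma survival_stopped t s : stopped s -> survival t s = 0.
Proof. intros Hs; unfold survival; destruct t; simpl; destruct (stopped_dec s); tauto || ring. Qed.

Lemma survival_O s : ~ stopped s -> survival 0 s = 1.
Proof. intros Hs; unfold survival; simpl; destruct (stopped_dec s); tauto || ring. Qed.

Lemma survival_S t s : ~ stopped s -> survival (S t) s = E (survival t) s.
Proof.
  intros Hs; unfold survival at 1; simpl; destruct (stopped_dec s); [tauto|].
  rewrite (E_affine (hit t) (survival t) (-1) 1) by (intros; unfold survival; ring). ring.
Qed.

Lemma survival_bounds t s : G s -> 0 <= survival t s <= 1.
Proof.
  revert s; induction t as [|t IH]; intros s Hs;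
    destruct (stopped_dec s) as [Hst|Hst].
  1,3: rewrite survival_stopped by exact Hst; lra.
  - rewrite survival_O by exact Hst; lra.
  - rewrite survival_S by exact Hst; split.
    + rewrite <- (expect_const 0 s); apply E_mono; auto; intros x Hx; apply IH, Hx.
    + rewrite <- (expect_const 1 s); apply E_mono; auto; intros x Hx; apply IH, Hx.
Qed.

Lemma survival_antitone t d s : G s -> survival (t + d) s <= survival t s.
Proof.
  revert s; induction t as [|t IH]; intros s Hs;
    destruct (stopped_dec s) as [Hst|Hst].
  1,3: rewrite !survival_stopped by exact Hst; lra.
  - rewrite survival_O by exact Hst; apply survival_bounds, Hs.
  - simpl; rewrite !survival_S by exact Hst; apply E_mono; auto.
Qed.

Lemma survival_add_le_half L t s : (forall x, G x -> survival L x <= / 2) ->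
  G s -> survival (t + L) s <= / 2 * survival t s.
Proof.
  intros HL; revert s; induction t as [|t IH]; intros s Hs;
    destruct (stopped_dec s) as [Hst|Hst].
  1,3: rewrite !survival_stopped by exact Hst; lra.
  - rewrite survival_O by exact Hst; simpl; rewrite Rmult_1_r; apply HL, Hs.
  - simpl; rewrite !survival_S by exact Hst.
    rewrite <- (Rplus_0_r (/ 2 * _)).
    rewrite <- (E_affine (survival t) (fun x => / 2 * survival t x)) by (intros; ring).
    apply E_mono; auto.
Qed.

Lemma survival_mul_le_half_pow L k s : (forall x, G x -> survival L x <= / 2) ->
  G s -> survival (k * L) s <= (/ 2) ^ k.
Proof.
  intros HL; revert s; induction k as [|k IH]; intros s Hs.
  - apply survival_bounds, Hs.
  - rewrite Nat.mul_succ_l; eapply Rle_trans; [apply survival_add_le_half; auto|].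
    simpl; apply Rmult_le_compat_l; [lra | apply IH, Hs].
Qed.

Section Potential.

Variable V : State -> R.
Hypothesis V_nonneg : forall s, G s -> 0 <= V s.
Hypothesis V_drift : forall s, G s -> ~ stopped s -> E V s <= V s - 1.

(* [t P(T > t) <= E[min(T, t)] <= V]: each step before stopping costs [V] at least 1. *)
Lemma survival_le_potential t s : G s -> INR t * survival t s <= V s.
Proof.
  revert s; induction t as [|t IH]; intros s Hs.
  - rewrite Rmult_0_l; apply V_nonneg, Hs.
  - destruct (stopped_dec s) as [Hst|Hst].
    + rewrite survival_stopped, Rmult_0_r by exact Hst; apply V_nonneg, Hs.
    + rewrite survival_S, S_INR by exact Hst.
      assert (Hle1 : E (survival t) s <= 1).
      { rewrite <- (expect_const 1 s); apply E_mono; auto; intros x Hx; apply survival_bounds, Hx. }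
      assert (HtV : INR t * E (survival t) s <= E V s).
      { rewrite <- (Rplus_0_r (INR t * _)).
        rewrite <- (E_affine (survival t) (fun x => INR t * survival t x)) by (intros; ring).
        apply E_mono; auto. }
      pose proof (V_drift s Hs Hst); lra.
Qed.

Lemma survival_le_half_pow Vmax L k T s :
  (forall x, G x -> V x <= Vmax) -> 2 * Vmax < INR L -> (k * L <= T)%nat ->
  G s -> survival T s <= (/ 2) ^ k.
Proof.
  intros HVmax HL HT Hs.
  assert (Hhalf : forall x, G x -> survival L x <= / 2).
  { intros x Hx.
    pose proof (survival_le_potential L x Hx); pose proof (HVmax x Hx).
    pose proof (survival_bounds L x Hx); pose proof (V_nonneg x Hx); nra. }
  replace T with (k * L + (T - k * L))%nat by lia.
  eapply Rle_trans; [apply survival_antitone, Hs|].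
  apply survival_mul_le_half_pow; auto.
Qed.

End Potential.

End Hitting.

Definition same (o o' : opinion) : nat := if opinion_eqb o o' then 1%nat else 0%nat.

Lemma count_S n s o : count (S n) s o = (count n s o + same (s n) o)%nat.
Proof.
  unfold count; rewrite seq_S, filter_app, length_app; simpl.
  unfold same; destruct (opinion_eqb (s n) o); simpl; lia.
Qed.

Lemma count_total n s : (count n s One + count n s Two + count n s Und)%nat = n.
Proof. induction n; [reflexivity|]. rewrite !count_S; unfold same; destruct (s n); simpl; lia. Qed.

Lemma count_total_R n s : INR (count n s One) + INR (count n s Two) + INR (count n s Und) = INR n.
Proof. pose proof (f_equal INR (count_total n s)) as E; rewrite !plus_INR in E; exact E. Qed.

Lemma count_pos n s j : (j < n)%nat -> (1 <= count n s (s j))%nat.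
Proof.
  induction n; intros Hj; [lia|]; rewrite count_S.
  destruct (Nat.eq_dec j n) as [->|Hne]; [unfold same; destruct (s n); simpl; lia|].
  specialize (IHn ltac:(lia)); lia.
Qed.

Lemma count_update n s i o o' : (i < n)%nat ->
  (count n (update s i o) o' + same (s i) o')%nat = (count n s o' + same o o')%nat.
Proof.
  induction n; intros Hi; [lia|]; rewrite !count_S.
  unfold update at 2; destruct (Nat.eqb_spec n i) as [->|Hne].
  - assert (Hold : count i (update s i o) o' = count i s o').
    { unfold count; f_equal; apply filter_ext_in; intros k Hk; apply in_seq in Hk.
      unfold update; destruct (Nat.eqb_spec k i); [lia|reflexivity]. }
    lia.
  - specialize (IHn ltac:(lia)); lia.
Qed.

Lemma count_update_eq n s i o o' : (i < n)%nat ->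
  count n (update s i o) o' = (count n s o' + same o o' - same (s i) o')%nat.
Proof. intros Hi; pose proof (count_update n s i o o' Hi); lia. Qed.

Lemma count_update_R n s i o o' : (i < n)%nat ->
  INR (count n (update s i o) o') = INR (count n s o') + INR (same o o') - INR (same (s i) o').
Proof.
  intros Hi; pose proof (f_equal INR (count_update n s i o o' Hi)) as E.
  rewrite !plus_INR in E; lra.
Qed.

Definition weight (p : R) (o : opinion) : R :=
  match o with One => 1 | Two => - (1 - p) | Und => 0 end.

Lemma Delta_w_update n p s i o : (i < n)%nat ->
  Delta_w n p (update s i o) = Delta_w n p s + weight p o - weight p (s i).
Proof.
  intros Hi; unfold Delta_w, x1, x2; rewrite !count_update_R by exact Hi.
  unfold same; destruct o, (s i); simpl; ring.
Qed.

(** * The one-step expectation of USD_p *)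

Lemma sumR_app l1 l2 f : sumR (l1 ++ l2) f = sumR l1 f + sumR l2 f.
Proof. induction l1; unfold sumR in *; simpl; [ring|]; rewrite IHl1; ring. Qed.

Lemma sumR_plus l f g : sumR l (fun x => f x + g x) = sumR l f + sumR l g.
Proof. induction l; unfold sumR in *; simpl; [ring|]; rewrite IHl; ring. Qed.

Lemma sumR_scale l f a : sumR l (fun x => a * f x) = a * sumR l f.
Proof. induction l; unfold sumR in *; simpl; [ring|]; rewrite IHl; ring. Qed.

Lemma sumR_ext l f g : (forall x, In x l -> f x = g x) -> sumR l f = sumR l g.
Proof. intros H; unfold sumR; f_equal; apply map_ext_in, H. Qed.

Lemma sumR_le l f g : (forall x, In x l -> f x <= g x) -> sumR l f <= sumR l g.
Proof.
  induction l; intros H; unfold sumR in *; simpl; [lra|].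
  apply Rplus_le_compat; [apply H; left; reflexivity | apply IHl; intros; apply H; right; auto].
Qed.

Lemma sumR_filter_neq n i g :
  sumR (filter (fun j => negb (j =? i)) (seq 0 n)) g =
  sumR (seq 0 n) g - (if i <? n then g i else 0).
Proof.
  induction n; [unfold sumR; simpl; ring|].
  rewrite seq_S, filter_app, !sumR_app, IHn; simpl; unfold sumR; simpl.
  destruct (Nat.ltb_spec i n), (Nat.ltb_spec i (S n)), (Nat.eqb_spec n i);
    simpl; try lia; subst; ring.
Qed.

Definition type_sum n s (g : opinion -> R) : R :=
  INR (count n s One) * g One + INR (count n s Two) * g Two + INR (count n s Und) * g Und.

Lemma sumR_by_type n s g : sumR (seq 0 n) (fun k => g (s k)) = type_sum n s g.
Proof.
  unfold type_sum; induction n; [unfold sumR; simpl; ring|].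
  rewrite seq_S, sumR_app, IHn, !count_S, !plus_INR; unfold sumR, same; simpl.
  destruct (s n); simpl; ring.
Qed.

Definition pair_sum n (F : nat -> nat -> R) : R :=
  sumR (seq 0 n) (fun i => sumR (filter (fun j => negb (j =? i)) (seq 0 n)) (F i)).

Lemma pair_sum_ext n F F' : (forall i j, (i < n)%nat -> (j < n)%nat -> F i j = F' i j) ->
  pair_sum n F = pair_sum n F'.
Proof.
  intros H; apply sumR_ext; intros i Hi; apply sumR_ext; intros j Hj.
  apply filter_In in Hj as [Hj _]; apply in_seq in Hi, Hj; apply H; lia.
Qed.

Lemma pair_sum_le n F F' : (forall i j, (i < n)%nat -> (j < n)%nat -> F i j <= F' i j) ->
  pair_sum n F <= pair_sum n F'.
Proof.
  intros H; apply sumR_le; intros i Hi; apply sumR_le; intros j Hj.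
  apply filter_In in Hj as [Hj _]; apply in_seq in Hi, Hj; apply H; lia.
Qed.

Lemma pair_sum_by_type n s g :
  pair_sum n (fun i j => g (s i) (s j)) = type_sum n s (fun o => type_sum n s (g o) - g o o).
Proof.
  unfold pair_sum; rewrite <- sumR_by_type; apply sumR_ext; intros i Hi; apply in_seq in Hi.
  rewrite sumR_filter_neq, (sumR_by_type n s (g (s i))).
  destruct (Nat.ltb_spec i n); [reflexivity | lia].
Qed.

Lemma pair_sum_affine n F a b :
  pair_sum n (fun i j => a * F i j + b) = a * pair_sum n F + b * (INR n * (INR n - 1)).
Proof.
  assert (Hpairs : pair_sum n (fun _ _ => 1) = INR n * (INR n - 1)).
  { rewrite (pair_sum_by_type n (fun _ => Und) (fun _ _ => 1)); unfold type_sum.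
    rewrite <- (count_total_R n (fun _ => Und)); ring. }
  rewrite <- Hpairs; unfold pair_sum; rewrite <- !sumR_scale, <- sumR_plus.
  apply sumR_ext; intros i _; rewrite <- !sumR_scale, <- sumR_plus.
  apply sumR_ext; intros j _; ring.
Qed.

Lemma step_expect_pair_sum n p h s :
  step_expect n p h s = / (INR n * INR (n - 1)) * pair_sum n (interact_value p h s).
Proof. reflexivity. Qed.

Lemma interact_value_affine p h1 h2 a b s i j : (forall x, h2 x = a * h1 x + b) ->
  interact_value p h2 s i j = a * interact_value p h1 s i j + b.
Proof. intros H; unfold interact_value; destruct (s i), (s j); rewrite ?H; ring. Qed.

Lemma step_expect_affine n p h1 h2 a b s : (2 <= n)%nat -> (forall x, h2 x = a * h1 x + b) ->
  step_expect n p h2 s = a * step_expect n p h1 s + b.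
Proof.
  intros Hn H; rewrite !step_expect_pair_sum.
  rewrite (pair_sum_ext n _ (fun i j => a * interact_value p h1 s i j + b))
    by (intros; apply interact_value_affine, H).
  rewrite pair_sum_affine, minus_INR by lia.
  assert (2 <= INR n) by (apply (le_INR 2); exact Hn).
  simpl; field; lra.
Qed.

Lemma step_expect_ext n p h1 h2 s : (forall x, h1 x = h2 x) ->
  step_expect n p h1 s = step_expect n p h2 s.
Proof.
  intros H; rewrite !step_expect_pair_sum; f_equal; apply pair_sum_ext; intros i j _ _.
  unfold interact_value; destruct (s i), (s j); rewrite ?H; reflexivity.
Qed.

Lemma step_expect_mono n p h1 h2 s : (2 <= n)%nat ->
  (forall i j, (i < n)%nat -> (j < n)%nat ->
     interact_value p h1 s i j <= interact_value p h2 s i j) ->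
  step_expect n p h1 s <= step_expect n p h2 s.
Proof.
  intros Hn H; rewrite !step_expect_pair_sum.
  assert (2 <= INR n) by (apply (le_INR 2); exact Hn).
  rewrite minus_INR by lia; simpl.
  apply Rmult_le_compat_l; [left; apply Rinv_0_lt_compat; nra | apply pair_sum_le, H].
Qed.

(* A step moves [Delta_w] by at most 1, so before [|Delta_w|] reaches [thr] it stays below [thr + 1]. *)
Definition admissible n p thr s :=
  (1 <= count n s One + count n s Two)%nat /\ Rabs (Delta_w n p s) < thr + 1.

Lemma admissible_update n p thr s i o : (i < n)%nat -> 0 <= p <= 1 ->
  Rabs (Delta_w n p s) < thr -> s i = Und \/ o = Und ->
  (1 <= count n (update s i o) One + count n (update s i o) Two)%nat ->
  admissible n p thr (update s i o).
Proof.
  intros Hi Hp Hthr Hmove Hdec; split; [exact Hdec|].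
  rewrite Delta_w_update by exact Hi.
  assert (Rabs (weight p o - weight p (s i)) <= 1).
  { destruct Hmove as [Hu | Hu]; rewrite Hu; [destruct o | destruct (s i)];
      simpl; unfold Rabs; destruct Rcase_abs; lra. }
  unfold Rabs in *; repeat destruct Rcase_abs; lra.
Qed.

Lemma admissible_of_x1_pos n p thr s : 0 < x1 n s -> Rabs (Delta_w n p s) < thr ->
  admissible n p thr s.
Proof.
  intros Hx Hthr; split; [|lra].
  assert (0 < count n s One)%nat by (apply INR_lt; simpl; exact Hx); lia.
Qed.

Lemma interact_value_mono_admissible n p thr h1 h2 s i j :
  (i < n)%nat -> (j < n)%nat -> 0 <= p <= 1 ->
  admissible n p thr s -> Rabs (Delta_w n p s) < thr ->
  (forall x, admissible n p thr x -> h1 x <= h2 x) ->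
  interact_value p h1 s i j <= interact_value p h2 s i j.
Proof.
  intros Hi Hj Hp Hadm Hthr H.
  pose proof (count_pos n s j Hj) as Hsj; destruct Hadm as [Hdec Hwin].
  unfold interact_value; destruct (s i) eqn:Ei, (s j) eqn:Ej.
  all: try (apply Rplus_le_compat; apply Rmult_le_compat_l; [lra| |lra|]).
  all: apply H; try (split; assumption).
  all: apply admissible_update; auto.
  all: rewrite !count_update_eq, Ei by exact Hi; unfold same; simpl; lia.
Qed.

(* [n (n - 1)] times the expected change of [F] in one step, at counts [a], [b], [c] of
   opinions 1, 2 and undecided. *)
Definition count_drift p (F : nat -> nat -> R) (a b c : nat) : R :=
  INR a * INR b * (p * F a b + (1 - p) * F (a - 1)%nat b - F a b)
  + INR a * INR b * (F a (b - 1)%nat - F a b)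
  + INR c * INR a * (F (S a) b - F a b)
  + INR c * INR b * (F a (S b) - F a b).

Lemma step_expect_counts n p F s : (2 <= n)%nat ->
  let a := count n s One in let b := count n s Two in let c := count n s Und in
  INR n * INR (n - 1) *
    (step_expect n p (fun x => F (count n x One) (count n x Two)) s - F a b) =
  count_drift p F a b c.
Proof.
  intros Hn a b c.
  set (f o o' := match o, o' with
                 | Two, One => F a (b - 1)%nat
                 | One, Two => p * F a b + (1 - p) * F (a - 1)%nat b
                 | Und, One => F (S a) b
                 | Und, Two => F a (S b)
                 | _, _ => F a b end).
  assert (Hiv : forall i j, (i < n)%nat -> (j < n)%nat ->
    interact_value p (fun x => F (count n x One) (count n x Two)) s i j = f (s i) (s j)).
  { intros i j Hi _; unfold interact_value, f.
    destruct (s i) eqn:Ei, (s j); rewrite ?count_update_eq, ?Ei by exact Hi; unfold same; simpl;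
      rewrite ?Nat.add_0_r, ?Nat.sub_0_r, ?Nat.add_1_r; reflexivity. }
  rewrite step_expect_pair_sum, (pair_sum_ext _ _ _ Hiv), pair_sum_by_type.
  pose proof (count_total_R n s) as Htot; fold a b c in Htot.
  assert (2 <= INR n) by (apply (le_INR 2); exact Hn).
  rewrite minus_INR by lia; simpl.
  rewrite Rmult_minus_distr_l, <- Rmult_assoc, Rinv_r, Rmult_1_l by nra.
  unfold type_sum, count_drift, f; fold a b c; rewrite <- Htot; ring.
Qed.

(** * The potential *)

Lemma ln_le_sub_1 x : 0 < x -> ln x <= x - 1.
Proof. intros Hx; pose proof (exp_ineq1_le (ln x)); rewrite exp_ln in H by exact Hx; lra. Qed.

Fixpoint harmonic (m : nat) : R :=
  match m with O => 0 | S m' => harmonic m' + / INR (S m') end.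

Lemma harmonic_nonneg m : 0 <= harmonic m.
Proof. induction m; cbn [harmonic]; [lra|]. pose proof (RinvN_pos m); rewrite S_INR; lra. Qed.

Lemma harmonic_le_add m d : harmonic m <= harmonic (m + d).
Proof.
  induction d; [rewrite Nat.add_0_r; lra|].
  rewrite Nat.add_succ_r; cbn [harmonic]; pose proof (RinvN_pos (m + d)); rewrite S_INR; lra.
Qed.

Lemma harmonic_le_1_ln m : (1 <= m)%nat -> harmonic m <= 1 + ln (INR m).
Proof.
  induction m as [|m IH]; intros Hm; [lia|].
  destruct (Nat.eq_dec m 0) as [->|Hm0]; [cbn [harmonic]; simpl; rewrite ln_1; lra|].
  specialize (IH ltac:(lia)); cbn [harmonic].
  assert (Hk : 1 <= INR m) by (apply (le_INR 1); lia).
  rewrite S_INR.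
  assert (Hstep : / (INR m + 1) <= ln (INR m + 1) - ln (INR m)).
  { pose proof (ln_le_sub_1 (INR m / (INR m + 1)) ltac:(apply Rdiv_lt_0_compat; lra)) as H.
    unfold Rdiv in H; rewrite ln_mult, ln_Rinv in H by (try apply Rinv_0_lt_compat; lra).
    replace (INR m * / (INR m + 1) - 1) with (- / (INR m + 1)) in H by (field; lra); lra. }
  lra.
Qed.

Lemma count_drift_bias_sq p a b c :
  let x := INR a in let y := INR b in let z := INR c in let q := 1 - p in
  count_drift p (fun a b => - (INR a - (1 - p) * INR b) ^ 2) a b c =
  - (x * y * (q + q ^ 2) + 2 * z * (x - q * y) ^ 2 + z * x + z * y * q ^ 2).
Proof.
  intros; unfold count_drift, x, y, z, q.
  destruct a, b; simpl Nat.sub; rewrite ?Nat.sub_0_r, ?S_INR, ?INR_0; ring.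
Qed.

Lemma count_drift_bias_sq_le p a b c : 0 <= p <= 1 ->
  count_drift p (fun a b => - (INR a - (1 - p) * INR b) ^ 2) a b c <=
  - (INR a * INR b * (1 - p) ^ 2).
Proof.
  intros Hp; rewrite count_drift_bias_sq.
  pose proof (pos_INR a); pose proof (pos_INR b); pose proof (pos_INR c).
  assert (0 <= INR a * INR b) by nra.
  assert (0 <= INR c * (INR a - (1 - p) * INR b) ^ 2) by (apply Rmult_le_pos; [lra | apply pow2_ge_0]).
  assert (0 <= INR c * INR b * (1 - p) ^ 2) by (apply Rmult_le_pos; [nra | apply pow2_ge_0]).
  nra.
Qed.

Lemma count_drift_harmonic p a b c : 0 <= p <= 1 -> (1 <= a + b)%nat ->
  count_drift p (fun a b => - harmonic (pred (a + b))) a b c <= INR a + INR b - INR c.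
Proof.
  intros Hp Hab; unfold count_drift.
  replace (pred (S a + b)) with (a + b)%nat by lia.
  replace (pred (a + S b)) with (a + b)%nat by lia.
  destruct (a + b)%nat as [|m] eqn:Em; [lia|]; simpl pred; cbn [harmonic].
  assert (Hm : INR a + INR b = INR (S m)) by (rewrite <- plus_INR, Em; reflexivity).
  assert (HSm : 0 < INR (S m)) by apply lt_0_INR, Nat.lt_0_succ.
  assert (Hc : INR c * INR a * (- (harmonic m + / INR (S m)) + harmonic m)
             + INR c * INR b * (- (harmonic m + / INR (S m)) + harmonic m) = - INR c).
  { replace (INR a) with (INR (S m) - INR b) by lra; field; lra. }
  enough (Hab2 : INR a * INR b * (p * - harmonic m + (1 - p) * - harmonic (pred (a - 1 + b)) + harmonic m)
                 + INR a * INR b * (- harmonic (pred (a + (b - 1))) + harmonic m) <= INR a + INR b)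
    by lra.
  destruct a as [|a]; [rewrite INR_0; pose proof (pos_INR b); lra|].
  destruct b as [|b]; [rewrite INR_0; pose proof (pos_INR (S a)); lra|].
  replace (pred (S a - 1 + S b)) with (a + b)%nat by lia.
  replace (pred (S a + (S b - 1))) with (a + b)%nat by lia.
  replace m with (S (a + b)) in * by lia; cbn [harmonic] in *.
  rewrite !S_INR, plus_INR in *.
  pose proof (pos_INR a); pose proof (pos_INR b).
  set (u := INR a) in *; set (v := INR b) in *; set (h := harmonic (a + b)).
  replace ((u + 1) * (v + 1) * (p * - (h + / (u + v + 1)) + (1 - p) * - h + (h + / (u + v + 1)))
           + (u + 1) * (v + 1) * (- h + (h + / (u + v + 1))))
    with ((u + 1) * (v + 1) * (2 - p) / (u + v + 1)) by (field; lra).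
  apply Rmult_le_reg_r with (u + v + 1); [lra|].
  unfold Rdiv; rewrite Rmult_assoc, Rinv_l, Rmult_1_r by lra.
  assert (0 <= (u + 1) * (v + 1) * p) by (apply Rmult_le_pos; nra).
  nra.
Qed.

Lemma mul_ge_of_balanced q N x y : 0 < q < 1 -> 0 <= x -> 0 <= y -> 0 <= N ->
  N / 3 <= x + y -> Rabs (x - q * y) <= q * N / 6 -> q * N * N / 144 <= x * y.
Proof.
  intros Hq Hx Hy HN Hw HD.
  assert (HD' : - (q * N / 6) <= x - q * y <= q * N / 6) by (unfold Rabs in HD; destruct Rcase_abs; lra).
  assert (Hy1 : y >= N / 12) by nra.
  assert (Hx1 : x >= q * N / 12) by nra.
  assert (0 <= q * N / 12) by (apply Rmult_le_pos; [apply Rmult_le_pos|]; lra).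
  nra.
Qed.

(* [576 = 4 * 144]: it makes the squared-bias drift beat the [3 N (x + y)] of the harmonic term. *)
Definition bias_scale p := 576 / (1 - p) ^ 3.

Lemma bias_scale_pos p : p < 1 -> 0 < bias_scale p.
Proof. intros Hp; apply Rdiv_lt_0_compat; [lra | apply pow_lt; lra]. Qed.

Lemma drift_combination p N x y z E1 E2 : 0 < p < 1 -> 0 <= x -> 0 <= y -> 0 <= z ->
  N = x + y + z -> Rabs (x - (1 - p) * y) <= (1 - p) * N / 6 ->
  E1 <= - (x * y * (1 - p) ^ 2) -> E2 <= x + y - z ->
  bias_scale p * E1 + 3 * N * E2 <= - (N * (N - 1)).
Proof.
  intros Hp Hx Hy Hz HN HD H1 H2; pose proof (bias_scale_pos p ltac:(lra)) as HA.
  unfold bias_scale in *; set (q := 1 - p) in *; assert (Hq : 0 < q < 1) by (unfold q; lra).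
  assert (HE2 : 3 * N * E2 <= 3 * N * (x + y - z)) by (apply Rmult_le_compat_l; lra).
  assert (HE1 : 576 / q ^ 3 * E1 <= - (576 / q * (x * y))).
  { replace (- (576 / q * (x * y))) with (576 / q ^ 3 * - (x * y * q ^ 2)) by (field; lra).
    apply Rmult_le_compat_l; lra. }
  assert (0 <= 576 / q * (x * y)) by (apply Rmult_le_pos; [apply Rlt_le, Rdiv_lt_0_compat|]; nra).
  destruct (Rle_dec (x + y) (N / 3)); [nra|].
  pose proof (mul_ge_of_balanced q N x y Hq Hx Hy ltac:(lra) ltac:(lra) HD).
  assert (576 / q * (x * y) >= 4 * N * N).
  { replace (4 * N * N) with (576 / q * (q * N * N / 144)) by (field; lra).
    apply Rle_ge, Rmult_le_compat_l; [apply Rlt_le, Rdiv_lt_0_compat|]; lra. }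
  nra.
Qed.

Definition potential_counts n p thr (a b : nat) : R :=
  bias_scale p * ((thr + 1) ^ 2 - (INR a - (1 - p) * INR b) ^ 2)
  + 3 * INR n * (harmonic n - harmonic (pred (a + b))).

Definition potential n p thr s := potential_counts n p thr (count n s One) (count n s Two).

Lemma potential_drift n p thr s : (2 <= n)%nat -> 0 < p < 1 ->
  admissible n p thr s -> Rabs (Delta_w n p s) <= (1 - p) * INR n / 6 ->
  step_expect n p (potential n p thr) s <= potential n p thr s - 1.
Proof.
  intros Hn Hp [Hdec _] Hsmall.
  pose proof (step_expect_counts n p (potential_counts n p thr) s Hn) as E; simpl in E.
  set (a := count n s One) in *; set (b := count n s Two) in *; set (c := count n s Und) in *.
  assert (Hlin : count_drift p (potential_counts n p thr) a b c =
    bias_scale p * count_drift p (fun a b => - (INR a - (1 - p) * INR b) ^ 2) a b c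
    + 3 * INR n * count_drift p (fun a b => - harmonic (pred (a + b))) a b c)
    by (unfold count_drift, potential_counts; ring).
  pose proof (drift_combination p (INR n) (INR a) (INR b) (INR c) _ _ Hp
    (pos_INR _) (pos_INR _) (pos_INR _) (eq_sym (count_total_R n s)) Hsmall
    (count_drift_bias_sq_le p a b c ltac:(lra)) (count_drift_harmonic p a b c ltac:(lra) Hdec)).
  assert (2 <= INR n) by (apply (le_INR 2); exact Hn).
  rewrite minus_INR in E by lia; simpl in E.
  change (potential n p thr s) with (potential_counts n p thr a b).
  change (fun x => potential_counts n p thr (count n x One) (count n x Two))
    with (potential n p thr) in E.
  set (X := step_expect n p (potential n p thr) s) in *.
  assert (Hneg : INR n * (INR n - 1) * (X - potential_counts n p thr a b + 1) <= 0).
  { rewrite Rmult_plus_distr_l, E, Hlin; lra. }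
  assert (0 < INR n * (INR n - 1)) by nra.
  nra.
Qed.

Lemma potential_nonneg n p thr s : p < 1 -> 0 <= thr ->
  admissible n p thr s -> 0 <= potential n p thr s.
Proof.
  intros Hp Hthr [Hdec HD]; pose proof (bias_scale_pos p Hp); unfold potential, potential_counts.
  assert (0 <= (thr + 1) ^ 2 - (INR (count n s One) - (1 - p) * INR (count n s Two)) ^ 2).
  { unfold Delta_w, x1, x2 in HD; unfold Rabs in HD; destruct Rcase_abs; nra. }
  assert (harmonic (pred (count n s One + count n s Two)) <= harmonic n).
  { set (m := pred (count n s One + count n s Two)).
    pose proof (harmonic_le_add m (n - m)) as Hm; pose proof (count_total n s).
    replace (m + (n - m))%nat with n in Hm by (unfold m; lia); exact Hm. }
  pose proof (pos_INR n); apply Rplus_le_le_0_compat; apply Rmult_le_pos; lra.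
Qed.

Definition potential_max n p thr := bias_scale p * (thr + 1) ^ 2 + 3 * INR n * (1 + ln (INR n)).

Lemma potential_le_max n p thr s : (1 <= n)%nat -> p < 1 ->
  potential n p thr s <= potential_max n p thr.
Proof.
  intros Hn Hp; pose proof (bias_scale_pos p Hp); unfold potential, potential_counts, potential_max.
  pose proof (harmonic_le_1_ln n Hn); pose proof (harmonic_nonneg (pred (count n s One + count n s Two))).
  pose proof (pos_INR n); pose proof (pow2_ge_0 (INR (count n s One) - (1 - p) * INR (count n s Two))).
  nra.
Qed.

Lemma hit_prob_eq_hit n p thr t s :
  hit_prob n p thr t s =
  hit config (step_expect n p) (fun x => thr <= Rabs (Delta_w n p x))
      (fun x => Rle_dec thr (Rabs (Delta_w n p x))) t s.
Proof.
  revert s; induction t as [|t IH]; intros s; simpl; destruct (Rle_dec _ _); try reflexivity.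
  apply step_expect_ext, IH.
Qed.

Theorem hit_prob_ge_potential n p thr L k T s :
  (2 <= n)%nat -> 0 < p < 1 -> 0 <= thr <= (1 - p) * INR n / 6 ->
  2 * potential_max n p thr < INR L ->
  (k * L <= T)%nat -> admissible n p thr s ->
  1 - (/ 2) ^ k <= hit_prob n p thr T s.
Proof.
  intros Hn Hp Hthr HL HT Hs.
  rewrite hit_prob_eq_hit.
  enough (H : survival _ (step_expect n p) _ (fun x => Rle_dec thr (Rabs (Delta_w n p x))) T s
              <= (/ 2) ^ k) by (unfold survival in H; lra).
  apply survival_le_half_pow with (G := admissible n p thr) (V := potential n p thr)
    (Vmax := potential_max n p thr) (L := L); try assumption.
  - intros; apply step_expect_affine; assumption.
  - intros h1 h2 x Hx Hstop H; apply step_expect_mono; [assumption|]; intros i j Hi Hj.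
    apply interact_value_mono_admissible with (n := n) (thr := thr); try assumption; [lra|].
    apply Rnot_le_lt, Hstop.
  - intros x Hx; apply potential_nonneg; [lra | lra | exact Hx].
  - intros x Hx Hstop; apply potential_drift; try assumption.
    apply Rnot_le_lt in Hstop; lra.
  - intros x _; apply potential_le_max; [lia | lra].
Qed.

(** * Asymptotics *)

Definition nat_up (x : R) : nat := Z.to_nat (up x).

Lemma nat_up_bounds x : 0 <= x -> x < INR (nat_up x) <= x + 1.
Proof.
  intros Hx; destruct (archimed x) as [H1 H2].
  assert (0 < up x)%Z by (apply lt_IZR; lra).
  unfold nat_up; rewrite INR_IZR_INZ, Z2Nat.id by lia; lra.
Qed.

Lemma le_nat_up m x : INR m <= x -> (m <= nat_up x)%nat.
Proof.
  intros Hm; pose proof (pos_INR m); pose proof (nat_up_bounds x ltac:(lra)).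
  apply INR_le; lra.
Qed.

Lemma nat_up_mul_le x y : 1 <= x -> 1 <= y -> INR (nat_up x * nat_up y) <= 4 * x * y.
Proof.
  intros Hx Hy; rewrite mult_INR.
  pose proof (nat_up_bounds x ltac:(lra)); pose proof (nat_up_bounds y ltac:(lra)).
  replace (4 * x * y) with ((2 * x) * (2 * y)) by ring.
  apply Rmult_le_compat; lra.
Qed.

Lemma one_le_ln N : 3 <= N -> 1 <= ln N.
Proof.
  intros HN; rewrite <- (ln_exp 1); pose proof exp_le_3.
  destruct (Rle_lt_or_eq_dec (exp 1) N) as [Hlt | <-]; [lra | | lra].
  left; apply ln_increasing; [apply exp_pos | exact Hlt].
Qed.

Lemma sqrt_mul_ln_le xi del N : 0 < xi -> 0 < del -> 1 <= N -> (2 * xi ^ 2 / del ^ 2) ^ 2 <= N ->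
  xi * sqrt (N * ln N) <= del * N.
Proof.
  intros Hxi Hdel HN HM.
  assert (Hs0 : 0 < sqrt N) by (apply sqrt_lt_R0; lra).
  assert (Hss : sqrt N * sqrt N = N) by (apply sqrt_sqrt; lra).
  assert (HsM : 2 * xi ^ 2 <= del ^ 2 * sqrt N).
  { assert (HMs : 2 * xi ^ 2 / del ^ 2 <= sqrt N).
    { rewrite <- (sqrt_pow2 (2 * xi ^ 2 / del ^ 2)) by (apply Rlt_le, Rdiv_lt_0_compat; nra).
      apply sqrt_le_1_alt, HM. }
    apply Rmult_le_compat_l with (r := del ^ 2) in HMs; [|nra].
    replace (del ^ 2 * (2 * xi ^ 2 / del ^ 2)) with (2 * xi ^ 2) in HMs by (field; lra); exact HMs. }
  assert (Hln : ln N <= 2 * sqrt N).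
  { rewrite <- Hss at 1; rewrite ln_mult by exact Hs0; pose proof (ln_le_sub_1 _ Hs0); lra. }
  assert (Hln0 : 0 <= ln N) by (rewrite <- ln_1; destruct (Req_dec N 1) as [->|]; [lra|];
    left; apply ln_increasing; lra).
  rewrite <- (sqrt_pow2 (del * N)) by nra.
  rewrite <- (sqrt_pow2 xi) at 1 by lra; rewrite <- sqrt_mult by nra.
  apply sqrt_le_1_alt.
  assert (Hkey : xi ^ 2 * ln N <= del ^ 2 * N).
  { replace (del ^ 2 * N) with (del ^ 2 * sqrt N * sqrt N) by (rewrite Rmult_assoc, Hss; reflexivity).
    nra. }
  nra.
Qed.

Lemma pow_half_le_Rpower N k : 0 < N -> ln N <= INR k -> (/ 2) ^ k <= Rpower N (- ln 2).
Proof.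
  intros HN Hk.
  replace (Rpower N (- ln 2)) with (Rpower 2 (- ln N)) by (unfold Rpower; f_equal; ring).
  rewrite pow_inv, <- Rpower_pow, <- Rpower_Ropp by lra.
  apply Rle_Rpower; lra.
Qed.

Lemma potential_max_le n p xi : p < 1 -> 3 <= INR n ->
  potential_max n p (xi * sqrt (INR n * ln (INR n))) <=
  (2 * bias_scale p * xi ^ 2 + 2 * bias_scale p + 6) * (INR n * ln (INR n)).
Proof.
  intros Hp HN; pose proof (bias_scale_pos p Hp) as HA; pose proof (one_le_ln _ HN) as Hln.
  unfold potential_max; set (N := INR n) in *; set (A := bias_scale p) in *.
  set (thr := xi * sqrt (N * ln N)).
  assert (Hsq : thr ^ 2 = xi ^ 2 * (N * ln N)).
  { unfold thr; rewrite Rpow_mult_distr, pow2_sqrt by nra; reflexivity. }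
  assert ((thr + 1) ^ 2 <= 2 * (xi ^ 2 * (N * ln N)) + 2)
    by (rewrite <- Hsq; pose proof (pow2_ge_0 (thr - 1)); nra).
  assert (1 <= N * ln N) by nra.
  assert (A * (thr + 1) ^ 2 <= A * (2 * (xi ^ 2 * (N * ln N)) + 2))
    by (apply Rmult_le_compat_l; lra).
  nra.
Qed.

Lemma hit_prob_ge_1_sub_Rpower n p thr K s : 3 <= INR n -> 0 < p < 1 ->
  0 <= thr <= (1 - p) * INR n / 6 -> potential_max n p thr <= K * (INR n * ln (INR n)) ->
  admissible n p thr s ->
  1 - Rpower (INR n) (- ln 2) <= hit_prob n p thr (nat_up (8 * K * INR n * ln (INR n) ^ 2)) s.
Proof.
  intros HN Hp Hthr HK Hs; pose proof (one_le_ln _ HN) as Hln.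
  assert (HV1 : 1 <= 2 * potential_max n p thr).
  { pose proof (bias_scale_pos p ltac:(lra)); pose proof (pow2_ge_0 (thr + 1)).
    unfold potential_max; nra. }
  set (k := nat_up (ln (INR n))).
  apply Rle_trans with (1 - (/ 2) ^ k).
  { apply Rplus_le_compat_l, Ropp_le_contravar, pow_half_le_Rpower; [lra|].
    apply Rlt_le, nat_up_bounds; lra. }
  apply hit_prob_ge_potential with (L := nat_up (2 * potential_max n p thr)); try assumption.
  - apply INR_le; simpl; lra.
  - apply nat_up_bounds; lra.
  - apply le_nat_up; eapply Rle_trans; [apply nat_up_mul_le; lra|].
    replace (8 * K * INR n * ln (INR n) ^ 2)
      with (4 * ln (INR n) * (2 * (K * (INR n * ln (INR n))))) by ring.
    apply Rmult_le_compat_l; lra.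
Qed.

Theorem lemma4 (eps p xi : R) :
  0 < eps <= 1 -> 0 < p < 1 -> 0 < xi ->
  exists (C c : R) (n0 : nat), 0 < C /\ 0 < c /\
    forall (n : nat) (s : config),
      (n0 <= n)%nat ->
      eps * INR n <= x1 n s ->
      x1 n s <= x2 n s ->
      uu n s <= INR n / 2 ->
      Rabs (Delta_w n p s) < xi * sqrt (INR n * ln (INR n)) ->
      hit_prob n p (xi * sqrt (INR n * ln (INR n)))
               (Z.to_nat (up (C * INR n * (ln (INR n)) ^ 2))) s
        >= 1 - Rpower (INR n) (- c).
Proof.
  intros Heps Hp Hxi; pose proof (bias_scale_pos p ltac:(lra)).
  set (K := 2 * bias_scale p * xi ^ 2 + 2 * bias_scale p + 6).
  set (M := 2 * xi ^ 2 / ((1 - p) / 6) ^ 2).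
  exists (8 * K), (ln 2), (Nat.max 3 (nat_up (M ^ 2))).
  split; [unfold K; pose proof (pow2_ge_0 xi); nra|]; split; [pose proof ln_lt_2; lra|].
  intros n s Hn Hx1 _ _ HD; apply Rle_ge.
  assert (HN : 3 <= INR n) by (replace 3 with (INR 3) by (simpl; ring); apply le_INR; lia).
  assert (HMN : M ^ 2 <= INR n).
  { pose proof (nat_up_bounds (M ^ 2) (pow2_ge_0 M)).
    assert (INR (nat_up (M ^ 2)) <= INR n) by (apply le_INR; lia); lra. }
  apply hit_prob_ge_1_sub_Rpower; try lra.
  - split; [apply Rmult_le_pos; [lra | apply sqrt_pos]|].
    replace ((1 - p) * INR n / 6) with ((1 - p) / 6 * INR n) by field.
    apply sqrt_mul_ln_le; [lra | lra | lra | exact HMN].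
  - apply potential_max_le; lra.
  - apply admissible_of_x1_pos; [nra | exact HD].
Qed.
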